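(* Let $I$ be an index set and $\prec$ a linear order on $I$. Suppose $\mathcal F$ and $\mathcal G$ are two $\prec$-ordered, reduced TDDs over $I$ with $\Phi(\mathcal F)=\Phi(\mathcal G)$. Then $\mathcal F$ and $\mathcal G$ are isomorphic.
   Context: Indices take values in $\{0,1\}$; a tensor over $I$ is a map $\{0,1\}^I\to\mathbb{C}$ (tensors over subsets of $I$ are regarded as tensors over $I$ not depending on the other indices). Each index $x$ is regarded as the tensor $x(c)=c$, and $\overline{x}(c):=1-c$; operations on tensors are pointwise. A TDD over $I$ is $\mathcal F=(V,E,index,value,low,high,w)$: a rooted directed acyclic graph with finite node set $V$ partitioned into non-terminal nodes $V_N$ and terminal nodes $V_T$, root $r_{\mathcal F}$; $index:V_N\to I$; $value:V_T\to\mathbb{C}$; $low,high:V_N\to V$; edges are the low-edges $(v,low(v))$ and high-edges $(v,high(v))$, $v\in V_N$, plus a unique source-less incoming edge $e_r$ of the root; $w$ gives each edge a complex weight and $w_{\mathcal F}:=w(e_r)$. Node tensors: $\Phi(v)=value(v)$ for terminal $v$; otherwise $\Phi(v)=w_0\overline{x_v}\Phi(low(v))+w_1x_v\Phi(high(v))$ with $x_v=index(v)$ and $w_0,w_1$ the low-/high-edge weights. The TDD represents $\Phi(\mathcal F):=w_{\mathcal F}\Phi(r_{\mathcal F})$. $\mathcal F$ is $\prec$-ordered if for every non-terminal node $v$, $index(v)\prec index(low(v))$ whenever $low(v)$ is non-terminal and $index(v)\prec index(high(v))$ whenever $high(v)$ is non-terminal. Normality (w.r.t. $\prec$): the pivot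 of a tensor $\phi$ is the lexicographically smallest (compare at the $\prec$-smallest differing index, $0<1$) $\vec a$ with $|\phi(\vec a)|=\max_{\vec b}|\phi(\vec b)|$; $\phi$ is normal if $\phi=0$ or $\phi$ equals $1$ at its pivot. A TDD is normal if $\Phi(v)$ is normal for every node $v$. A TDD is reduced if it is normal and (1) $\Phi(v)\neq0$ for every node $v$; (2) all edges of weight $0$ point to the unique terminal node, which has value $1$; (3) $\Phi(u)\neq\Phi(v)$ for any two distinct nodes $u\neq v$. Two TDDs are isomorphic if there is a graph isomorphism between them (including the root edges $e_r$) preserving node indices, edge weights and terminal values, and mapping low-edges to low-edges and high-edges to high-edges. *)

From mathcomp Require Import all_boot all_order all_algebra.
From mathcomp Require Import complex Rstruct.
From Stdlib Require Import Reals.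
Set Implicit Arguments.
Unset Strict Implicit.
Unset Printing Implicit Defensive.
Import GRing.Theory Num.Theory.
Local Open Scope ring_scope.

Definition CC : numClosedFieldType := (Rdefinitions.R)[i].

Section TDDDefs.
Variable I : finType.

Definition assignment := {ffun I -> bool}.
Definition tensor := assignment -> CC.

Definition idx_tensor (x : I) : tensor := fun c => (c x : nat)%:R.

Definition strict_linear_order (lt : rel I) : Prop :=
  [/\ irreflexive lt, transitive lt &
      forall i j, i != j -> lt i j || lt j i].

Definition lex_lt (lt : rel I) (a b : assignment) : Prop :=
  exists i, [/\ a i = false, b i = true & forall j, lt j i -> a j = b j].

Definition is_pivot (lt : rel I) (phi : tensor) (a : assignment) : Prop :=
  (forall b, `|phi b| <= `|phi a|) /\
  (forall b, `|phi b| = `|phi a| -> b <> a -> lex_lt lt a b).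

Definition normal_tensor (lt : rel I) (phi : tensor) : Prop :=
  phi = (fun _ => 0) \/ exists a, is_pivot lt phi a /\ phi a = 1.

(* For a non-terminal node v: index v, low v, high v, and the weights
   wlow v / whigh v of its low-/high-edge.  wroot is the weight of the
   root edge e_r. *)
Record TDD := MkTDD {
  VN : finType;
  VT : finType;
  root : (VN + VT)%type;
  index : VN -> I;
  value : VT -> CC;
  low : VN -> (VN + VT)%type;
  high : VN -> (VN + VT)%type;
  wlow : VN -> CC;
  whigh : VN -> CC;
  wroot : CC
}.

Definition node (F : TDD) : finType := (VN F + VT F)%type.

Definition tdd_edge (F : TDD) : rel (node F) :=
  fun u w => match u with
             | inl v => (w == low v) || (w == high v)
             | inr _ => false
             end.

Definition rooted_dag (F : TDD) : Prop :=
  (forall u : node F, connect (@tdd_edge F) (root F) u) /\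
  (forall u w : node F, tdd_edge u w -> ~~ connect (@tdd_edge F) w u).

(* node tensors, by recursion with fuel (the fuel #|node F| suffices on a DAG) *)
Fixpoint phi_fuel (F : TDD) (n : nat) (u : node F) : tensor :=
  match u with
  | inr t => fun _ => value t
  | inl v =>
      match n with
      | 0 => fun _ => 0
      | n'.+1 => fun c =>
          wlow v * (1 - idx_tensor (index v) c) * phi_fuel n' (low v) c
          + whigh v * idx_tensor (index v) c * phi_fuel n' (high v) c
      end
  end.

Definition Phi_node (F : TDD) (u : node F) : tensor := phi_fuel #|{: node F}| u.

Definition Phi (F : TDD) : tensor := fun c => wroot F * Phi_node (root F) c.

Definition ordered (lt : rel I) (F : TDD) : Prop :=
  forall v : VN F,
    (forall u, low v = inl u -> lt (index v) (index u)) /\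
    (forall u, high v = inl u -> lt (index v) (index u)).

Definition normal_tdd (lt : rel I) (F : TDD) : Prop :=
  forall u : node F, normal_tensor lt (Phi_node u).

Definition zero_edge_ok (F : TDD) (target : node F) : Prop :=
  exists t : VT F, [/\ target = inr t, value t = 1 & forall t' : VT F, t' = t].

Definition reduced (lt : rel I) (F : TDD) : Prop :=
  [/\ normal_tdd lt F,
      (forall u : node F, Phi_node u <> (fun _ => 0)),
      (wroot F = 0 -> zero_edge_ok (root F)) /\
      (forall v : VN F, (wlow v = 0 -> zero_edge_ok (low v)) /\
                        (whigh v = 0 -> zero_edge_ok (high v))) &
      (forall u w : node F, u <> w -> Phi_node u <> Phi_node w)].

Definition tdd_isomorphic (F G : TDD) : Prop :=
  exists (fN : VN F -> VN G) (fT : VT F -> VT G),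
    let f (u : node F) : node G :=
      match u with inl v => inl (fN v) | inr t => inr (fT t) end in
    [/\ bijective fN, bijective fT,
        f (root F) = root G /\ wroot F = wroot G,
        (forall t, value (fT t) = value t) &
        (forall v, [/\ index (fN v) = index v,
                       low (fN v) = f (low v), high (fN v) = f (high v),
                       wlow (fN v) = wlow v & whigh (fN v) = whigh v])].

Definition is_TDD (F : TDD) : Prop := rooted_dag F.

End TDDDefs.

From Pilot Require Import Defs.
From mathcomp Require Import all_boot all_order all_algebra.
From Stdlib Require Import Classical FunctionalExtensionality.
(* Let [index] denote the TDD field again rather than [seq.index]. *)
Import Defs.
Set Implicit Arguments.
Unset Strict Implicit.
Unset Printing Implicit Defensive.
Import Order.TTheory GRing.Theory Num.Theory.
Local Open Scope ring_scope.

(* Normalisation pins down a nonzero tensor up to its scalar: if [k * phi = k' * psi]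
   with [phi], [psi] normal and nonzero, then [k = k'] and, unless [k = 0], [phi = psi],
   because both tensors take the value 1 at their common pivot.  In an ordered TDD the
   tensor of a node ignores all indices below its own, whereas in a reduced TDD it
   genuinely depends on its own index (otherwise both children would coincide and the
   node would have the tensor of its child).  So two nodes with the same tensor have the
   same index, the same edge weights and children with the same tensors.  Walking down
   from the roots, every node of F thus has a node of G with the same tensor and vice
   versa; as distinct nodes of a reduced TDD have distinct tensors, these two maps are
   mutually inverse and form an isomorphism. *)

Section StrictLinearOrder.
Variables (I : finType) (lt : rel I).
Hypothesis lt_order : strict_linear_order lt.

Lemma slo_irr i : lt i i = false.
Proof. by case: lt_order. Qed.

Lemma slo_trans {i j k} : lt i j -> lt j k -> lt i k.
Proof. by case: lt_order => _ lt_trans _; apply: lt_trans. Qed.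

Lemma slo_total i j : i != j -> lt i j || lt j i.
Proof. by case: lt_order => _ _; apply. Qed.

Lemma lex_lt_asym a b : lex_lt lt a b -> ~ lex_lt lt b a.
Proof.
case=> i [ai bi lt_i] [k [bk ak lt_k]].
have ik : i != k by apply: contraTneq ak => <-; rewrite ai.
by case/orP: (slo_total ik) => [/lt_k | /lt_i]; rewrite ?ai ?bi ?ak ?bk.
Qed.

Lemma normal_tensor_proportional (phi psi : tensor I) (r : CC) :
    normal_tensor lt phi -> normal_tensor lt psi -> phi <> (fun _ => 0) ->
  (forall c, phi c = r * psi c) -> phi = psi.
Proof.
move=> [phi0 | [a [[a_max a_piv] phi_a]]] psi_normal phi_neq0 phi_r //.
have r_neq0 : r != 0.
  apply: contra_notN phi_neq0 => /eqP r0.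
  by apply: functional_extensionality => c; rewrite phi_r r0 mul0r.
case: psi_normal => [psi0 | [b [[b_max b_piv] psi_b]]].
  by case: phi_neq0; apply: functional_extensionality => c; rewrite phi_r psi0 mulr0.
have norm_phi c : `|phi c| = `|r| * `|psi c| by rewrite phi_r normrM.
have a_eq_b : a = b.
  case: (eqVneq a b) => // /eqP a_neq_b; exfalso.
  have psi_ab : `|psi a| = `|psi b|.
    apply/le_anti; rewrite b_max /=.
    by have := a_max b; rewrite !norm_phi ler_pM2l ?normr_gt0.
  have phi_ba : `|phi b| = `|phi a| by rewrite !norm_phi psi_ab.
  exact: lex_lt_asym (a_piv b phi_ba (nesym a_neq_b)) (b_piv a psi_ab a_neq_b).
have r1 : r = 1 by move: (phi_r a); rewrite phi_a a_eq_b psi_b mulr1.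
by apply: functional_extensionality => c; rewrite phi_r r1 mul1r.
Qed.

Lemma normal_tensor_scale_eq (phi psi : tensor I) (k k' : CC) :
    normal_tensor lt phi -> normal_tensor lt psi ->
    phi <> (fun _ => 0) -> psi <> (fun _ => 0) ->
  (forall c, k * phi c = k' * psi c) -> k = k' /\ (k = 0 \/ phi = psi).
Proof.
move=> phi_normal psi_normal phi_neq0 psi_neq0 phi_psi.
have [c psi_c] : exists c, psi c != 0.
  apply: NNPP => psi0; apply: psi_neq0; apply: functional_extensionality => c.
  by case: (eqVneq (psi c) 0) => // psi_c; case: psi0; exists c.
have [k0 | k_neq0] := eqVneq k 0.
  split; last by left.
  move/esym/eqP: (phi_psi c); rewrite k0 mul0r mulf_eq0 (negbTE psi_c) orbF.
  by move/eqP ->.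
have phi_eq_psi : phi = psi.
  apply: (normal_tensor_proportional (r := k' / k)) => // d.
  by rewrite -(mulKf k_neq0 (phi d)) phi_psi mulrA [k^-1 * k']mulrC.
by split; [move: (phi_psi c); rewrite phi_eq_psi => /(mulIf psi_c) | right].
Qed.

End StrictLinearOrder.

Definition upd (I : finType) (c : assignment I) (i : I) (b : bool) : assignment I :=
  [ffun j => if j == i then b else c j].

Definition node_map (I : finType) (F G : TDD I) (fN : VN F -> VN G) (fT : VT F -> VT G)
    (u : node F) : node G :=
  match u with inl v => inl (fN v) | inr t => inr (fT t) end.

Section OneTDD.
Variables (I : finType) (lt : rel I) (F : TDD I).
Hypothesis lt_order : strict_linear_order lt.
Hypothesis F_dag : is_TDD F.
Hypothesis F_ordered : ordered lt F.
Hypothesis F_reduced : reduced lt F.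

Lemma rooted_ind (P : node F -> Prop) :
  P (root F) -> (forall u w, tdd_edge u w -> P u -> P w) -> forall u, P u.
Proof.
move=> P_root P_edge u; case: F_dag => /(_ u) /connectP [p] + -> _.
elim: p (root F) P_root => [|w p IHp] x P_x //= /andP[xw pw].
exact: IHp (P_edge _ _ xw P_x) pw.
Qed.

Lemma tdd_edge_low v : tdd_edge (inl v : node F) (low v).
Proof. by rewrite /tdd_edge eqxx. Qed.

Lemma tdd_edge_high v : tdd_edge (inl v : node F) (high v).
Proof. by rewrite /tdd_edge eqxx orbT. Qed.

Lemma tdd_edge_irrefl (u : node F) : ~~ tdd_edge u u.
Proof. by apply/negP => uu; case: F_dag => _ /(_ u u uu); rewrite connect0. Qed.

Definition depth (u : node F) : nat := #|[set w | connect (@tdd_edge I F) u w]|.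

Lemma depth_gt0 u : (0 < depth u)%N.
Proof. by rewrite card_gt0; apply/set0Pn; exists u; rewrite inE connect0. Qed.

Lemma depth_edge u w : tdd_edge u w -> (depth w < depth u)%N.
Proof.
move=> uw; apply: proper_card; rewrite properE; apply/andP; split.
  by apply/subsetP => x; rewrite !inE; apply: connect_trans (connect1 uw).
case: F_dag => _ /(_ u w uw) wu.
by apply/subsetPn; exists u; rewrite !inE ?connect0.
Qed.

Lemma phi_fuel_stable n m u :
  (depth u <= n)%N -> (depth u <= m)%N -> phi_fuel n u = phi_fuel m u.
Proof.
elim: n m u => [|n IHn] [|m] [v|t] //= un um;
  try by have := depth_gt0 (inl v); rewrite ltnNge ?un ?um.
have child u : tdd_edge (inl v) u -> (depth u <= n)%N /\ (depth u <= m)%N.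
  by move/depth_edge => vu; split; rewrite -ltnS; apply: leq_trans vu _.
have [lo_n lo_m] := child _ (tdd_edge_low v).
have [hi_n hi_m] := child _ (tdd_edge_high v).
by rewrite (IHn m (low v)) ?(IHn m (high v)).
Qed.

Lemma Phi_node_fuel n u : (depth u <= n)%N -> phi_fuel n u = Phi_node u.
Proof. by move=> un; apply: phi_fuel_stable => //; apply: max_card. Qed.

Lemma Phi_node_terminal t : Phi_node (inr t : node F) = fun _ => value t.
Proof. by rewrite /Phi_node; case: #|_|. Qed.

Lemma Phi_nodeE v c : Phi_node (inl v : node F) c =
  wlow v * (1 - idx_tensor (index v) c) * Phi_node (low v) c
  + whigh v * idx_tensor (index v) c * Phi_node (high v) c.
Proof.
have lo := depth_edge (tdd_edge_low v); have hi := depth_edge (tdd_edge_high v).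
rewrite -(Phi_node_fuel (leqnn (depth (inl v)))).
move: lo hi; case: (depth (inl v)) => [|n] lo hi; first by rewrite ltn0 in lo.
by rewrite /= !Phi_node_fuel.
Qed.

Lemma phi_fuel_upd n (u : node F) i b c :
  (forall w, u = inl w -> lt i (index w)) -> phi_fuel n u (upd c i b) = phi_fuel n u c.
Proof.
elim: n u => [|n IHn] [v|t] // above_i.
have i_v := above_i v erefl.
have upd_v : upd c i b (index v) = c (index v).
  by rewrite ffunE; case: eqP => // vi; rewrite vi (slo_irr lt_order) in i_v.
have [lo_v hi_v] := F_ordered v.
by rewrite /= /idx_tensor upd_v !IHn // => w; [move/hi_v | move/lo_v];
  apply: (slo_trans lt_order i_v).
Qed.

Lemma Phi_node_upd (u : node F) i b c :
  (forall w, u = inl w -> lt i (index w)) -> Phi_node u (upd c i b) = Phi_node u c.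
Proof. exact: phi_fuel_upd. Qed.

Lemma Phi_node_low_cofactor v c :
  Phi_node (inl v : node F) (upd c (index v) false) = wlow v * Phi_node (low v) c.
Proof.
have [lo_v hi_v] := F_ordered v.
rewrite Phi_nodeE (Phi_node_upd _ _ lo_v) (Phi_node_upd _ _ hi_v).
by rewrite /idx_tensor ffunE eqxx subr0 mulr1 mulr0 mul0r addr0.
Qed.

Lemma Phi_node_high_cofactor v c :
  Phi_node (inl v : node F) (upd c (index v) true) = whigh v * Phi_node (high v) c.
Proof.
have [lo_v hi_v] := F_ordered v.
rewrite Phi_nodeE (Phi_node_upd _ _ lo_v) (Phi_node_upd _ _ hi_v).
by rewrite /idx_tensor ffunE eqxx subrr mulr0 mul0r add0r mulr1.
Qed.

Lemma terminal_value (t : VT F) : value t = 1.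
Proof.
case: F_reduced => normal nonzero _ _.
case: (normal (inr t)) => [/nonzero // | [a [_]]].
by rewrite Phi_node_terminal.
Qed.

Lemma Phi_node_inj : injective (@Phi_node I F).
Proof.
case: F_reduced => _ _ _ distinct u w e.
by case: (eqVneq u w) => // /eqP uw; case: (distinct u w uw e).
Qed.

Lemma terminal_unique (t t' : VT F) : t = t'.
Proof.
suff [] : (inr t : node F) = inr t' by [].
by apply: Phi_node_inj; rewrite !Phi_node_terminal !terminal_value.
Qed.

Lemma zero_edge_ok_Phi (u : node F) : zero_edge_ok u -> Phi_node u = fun _ => 1.
Proof. by case=> t [-> _ _]; rewrite Phi_node_terminal terminal_value. Qed.

Lemma Phi_node_depends_on_index v :
  ~ (forall c, Phi_node (inl v : node F) (upd c (index v) false)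
               = Phi_node (inl v : node F) (upd c (index v) true)).
Proof.
move=> indep.
case: (F_reduced) => normal nonzero _ _.
have cofactors c : wlow v * Phi_node (low v) c = whigh v * Phi_node (high v) c.
  by rewrite -Phi_node_low_cofactor -Phi_node_high_cofactor indep.
have [w_eq [w0 | lo_hi]] := normal_tensor_scale_eq lt_order (normal _) (normal _)
  (nonzero _) (nonzero _) cofactors.
  apply: (nonzero (inl v)); apply: functional_extensionality => c.
  by rewrite Phi_nodeE -w_eq w0 !mul0r addr0.
have v_lo : Phi_node (inl v : node F) = Phi_node (low v).
  apply: (normal_tensor_proportional lt_order (r := wlow v)) => // c.
  by rewrite Phi_nodeE -w_eq -lo_hi -mulrDl -mulrDr subrK mulr1.
by move: (tdd_edge_low v); rewrite -(Phi_node_inj v_lo) (negbTE (tdd_edge_irrefl _)).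
Qed.

Lemma Phi_node_nonconst v k : Phi_node (inl v : node F) <> fun _ => k.
Proof. by move=> const; apply: (@Phi_node_depends_on_index v) => c; rewrite const. Qed.

End OneTDD.

Lemma Phi_node_eq_index_nlt (I : finType) (lt : rel I) (F G : TDD I) (v : VN F) (v' : VN G) :
    strict_linear_order lt -> is_TDD F -> ordered lt F -> reduced lt F -> ordered lt G ->
  Phi_node (inl v : node F) = Phi_node (inl v' : node G) -> ~ lt (index v) (index v').
Proof.
move=> lt_order F_dag F_ordered F_reduced G_ordered e v_v'.
apply: (Phi_node_depends_on_index lt_order F_dag F_ordered F_reduced (v := v)) => c.
have above w : (inl v' : node G) = inl w -> lt (index v) (index w) by case=> <-.
by rewrite e !(Phi_node_upd lt_order G_ordered _ _ above).
Qed.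

Section TwoTDDs.
Variables (I : finType) (lt : rel I) (F G : TDD I).
Hypothesis lt_order : strict_linear_order lt.
Hypotheses (F_dag : is_TDD F) (F_ordered : ordered lt F) (F_reduced : reduced lt F).
Hypotheses (G_dag : is_TDD G) (G_ordered : ordered lt G) (G_reduced : reduced lt G).

Lemma scaled_Phi_node_eq (w w' : CC) (u : node F) (u' : node G) :
    (w = 0 -> zero_edge_ok u) -> (w' = 0 -> zero_edge_ok u') ->
  (forall c, w * Phi_node u c = w' * Phi_node u' c) -> w = w' /\ Phi_node u = Phi_node u'.
Proof.
move=> u_ok u'_ok scaled.
case: F_reduced G_reduced => [F_normal F_nonzero _ _] [G_normal G_nonzero _ _].
have [w_eq [w0 | //]] := normal_tensor_scale_eq lt_order (F_normal u) (G_normal u')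
  (F_nonzero u) (G_nonzero u') scaled.
split=> //; rewrite (zero_edge_ok_Phi F_reduced (u_ok w0)).
by rewrite (zero_edge_ok_Phi G_reduced (u'_ok _)) // -w_eq.
Qed.

Lemma Phi_node_eq_nonterminal (v : VN F) (v' : VN G) :
  Phi_node (inl v : node F) = Phi_node (inl v' : node G) ->
  [/\ index v' = index v, wlow v' = wlow v, whigh v' = whigh v,
      Phi_node (low v') = Phi_node (low v) & Phi_node (high v') = Phi_node (high v)].
Proof.
move=> e.
have index_eq : index v' = index v.
  case: (eqVneq (index v') (index v)) => // /(slo_total lt_order) /orP[] lt_index.
    by case: (Phi_node_eq_index_nlt lt_order G_dag G_ordered G_reduced F_ordered (esym e)).
  by case: (Phi_node_eq_index_nlt lt_order F_dag F_ordered F_reduced G_ordered e).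
case: F_reduced G_reduced => _ _ [_ F_zero] _ [_ _ [_ G_zero] _].
have [wlow_eq low_eq] : wlow v = wlow v' /\ Phi_node (low v) = Phi_node (low v').
  apply: scaled_Phi_node_eq; [exact: (F_zero v).1 | exact: (G_zero v').1 | move=> c].
  rewrite -(Phi_node_low_cofactor lt_order F_dag F_ordered).
  by rewrite -(Phi_node_low_cofactor lt_order G_dag G_ordered) index_eq e.
have [whigh_eq high_eq] : whigh v = whigh v' /\ Phi_node (high v) = Phi_node (high v').
  apply: scaled_Phi_node_eq; [exact: (F_zero v).2 | exact: (G_zero v').2 | move=> c].
  rewrite -(Phi_node_high_cofactor lt_order F_dag F_ordered).
  by rewrite -(Phi_node_high_cofactor lt_order G_dag G_ordered) index_eq e.
by split.
Qed.

Hypothesis Phi_eq : Phi F = Phi G.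

Lemma root_Phi_node_eq : wroot F = wroot G /\ Phi_node (root F) = Phi_node (root G).
Proof.
case: F_reduced G_reduced => _ _ [F_zero _] _ [_ _ [G_zero _] _].
by apply: scaled_Phi_node_eq => // c; apply: (congr1 (@^~ c) Phi_eq).
Qed.

Lemma exists_Phi_node_eq (u : node F) : exists u' : node G, Phi_node u' = Phi_node u.
Proof.
elim/(rooted_ind F_dag): u; first by exists (root G); rewrite root_Phi_node_eq.2.
move=> [v|t] w //= vw [[v'|t'] e]; last first.
  by case: (Phi_node_nonconst lt_order F_dag F_ordered F_reduced (v := v) (k := value t'));
    rewrite -e Phi_node_terminal.
have [_ _ _ low_eq high_eq] := Phi_node_eq_nonterminal (esym e).
by case/orP: vw => /eqP ->; [exists (low v') | exists (high v')].
Qed.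

Lemma exists_Phi_preserving_node_map :
  exists (fN : VN F -> VN G) (fT : VT F -> VT G),
    forall u, Phi_node (node_map fN fT u) = Phi_node u.
Proof.
have /fin_all_exists [fN fN_Phi] : forall v : VN F,
    exists v' : VN G, Phi_node (inl v' : node G) = Phi_node (inl v : node F).
  move=> v; have [[v'|t'] e] := exists_Phi_node_eq (inl v); first by exists v'.
  by case: (Phi_node_nonconst lt_order F_dag F_ordered F_reduced (v := v) (k := value t'));
    rewrite -e Phi_node_terminal.
have /fin_all_exists [fT fT_Phi] : forall t : VT F,
    exists t' : VT G, Phi_node (inr t' : node G) = Phi_node (inr t : node F).
  move=> t; have [[v'|t'] e] := exists_Phi_node_eq (inr t); last by exists t'.
  by case: (Phi_node_nonconst lt_order G_dag G_ordered G_reduced (v := v') (k := value t));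
    rewrite e Phi_node_terminal.
by exists fN, fT; case=> [v|t]; [exact: fN_Phi | exact: fT_Phi].
Qed.

Lemma Phi_preserving_node_maps_isomorphic (fN : VN F -> VN G) (fT : VT F -> VT G)
    (gN : VN G -> VN F) (gT : VT G -> VT F) :
    (forall u, Phi_node (node_map fN fT u) = Phi_node u) ->
    (forall u, Phi_node (node_map gN gT u) = Phi_node u) ->
  tdd_isomorphic F G.
Proof.
move=> f_Phi g_Phi; exists fN, fT; split.
- exists gN => v.
    by case: (Phi_node_inj F_reduced (etrans (g_Phi (inl (fN v))) (f_Phi (inl v)))).
  by case: (Phi_node_inj G_reduced (etrans (f_Phi (inl (gN v))) (g_Phi (inl v)))).
- by exists gT => t; [apply: (terminal_unique F_reduced) | apply: (terminal_unique G_reduced)].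
- split; last exact: root_Phi_node_eq.1.
  by apply: (Phi_node_inj G_reduced); rewrite (f_Phi (root F)) root_Phi_node_eq.2.
- by move=> t; rewrite (terminal_value F_reduced) (terminal_value G_reduced).
- move=> v; have [? ? ? low_eq high_eq] := Phi_node_eq_nonterminal (esym (f_Phi (inl v))).
  split=> //; apply: (Phi_node_inj G_reduced).
    by rewrite low_eq; exact: esym (f_Phi (low v)).
  by rewrite high_eq; exact: esym (f_Phi (high v)).
Qed.

End TwoTDDs.

Theorem theorem3 (I : finType) (lt : rel I) (F G : TDD I) :
  strict_linear_order lt ->
  is_TDD F -> is_TDD G ->
  ordered lt F -> ordered lt G ->
  reduced lt F -> reduced lt G ->
  Phi F = Phi G ->
  tdd_isomorphic F G.
Proof.
move=> lt_order F_dag G_dag F_ordered G_ordered F_reduced G_reduced Phi_eq.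
have [fN [fT f_Phi]] := exists_Phi_preserving_node_map lt_order
  F_dag F_ordered F_reduced G_dag G_ordered G_reduced Phi_eq.
have [gN [gT g_Phi]] := exists_Phi_preserving_node_map lt_order
  G_dag G_ordered G_reduced F_dag F_ordered F_reduced (esym Phi_eq).
exact: (Phi_preserving_node_maps_isomorphic lt_order
  F_dag F_ordered F_reduced G_dag G_ordered G_reduced Phi_eq f_Phi g_Phi).
Qed.
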